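(* 1. $K_0=\mathbb X$. 2. $K_{\nu_2}\subset K_{\nu_1}$ whenever $0\le\nu_1\le\nu_2$. 3. For every $\nu>1$, $K_\nu=\operatorname{argmin}_{z\in\mathbb X}\mathcal R(z)+\ker(A)$. 4. $\mathrm{dom}(\mathcal R)+\ker(A)\subset K_{1/2}$.
   Context: Standing setting: $\mathbb X$ real Banach space, $\tau$ a topology with $(\mathbb X,\tau)$ locally convex Hausdorff; $\mathcal R:\mathbb X\to(-\infty,\infty]$ proper convex with $\tau$-compact sublevel sets $\{\mathcal R\le\lambda\}$, $\lambda\in\mathbb R$; $\mathbb Y$ real Hilbert space; $A:\mathbb X\to\mathbb Y$ linear, $\tau$-to-weak continuous. $T_\alpha(x,g):=\frac1{2\alpha}\|g-Ax\|_{\mathbb Y}^2+\mathcal R(x)$, $R_\alpha(g):=\operatorname{argmin}_{x\in\mathrm{dom}(\mathcal R)}T_\alpha(x,g)$. For $\nu\ge0$, $\varrho_\nu(x):=\sup\{\alpha^{-\nu}\|Ax-Ax_\alpha\|_{\mathbb Y}:\alpha>0,x_\alpha\in R_\alpha(Ax)\}\in[0,\infty]$ and $K_\nu:=\{x\in\mathbb X:\varrho_\nu(x)<\infty\}$. *)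

From HB Require Import structures.
From mathcomp Require Import all_boot all_order all_algebra.
From mathcomp Require Import all_classical all_reals all_analysis.
Set Implicit Arguments. Unset Strict Implicit. Unset Printing Implicit Defensive.
Import Order.TTheory GRing.Theory Num.Theory.
Import numFieldNormedType.Exports.
Local Open Scope classical_set_scope.
Local Open Scope ring_scope.

(* ip is an inner product on the (complete) normed space Y inducing its norm:
   (Y, ip) is then a real Hilbert space. *)
Definition inner_product_of_norm (R : realType) (Y : normedModType R)
    (ip : Y -> Y -> R) : Prop :=
  [/\ forall y z, ip y z = ip z y,
      forall a y1 y2 z, ip (a *: y1 + y2) z = a * ip y1 z + ip y2 z &
      forall y, ip y y = `|y| ^+ 2].

(* A : X -> Y is continuous from (X, tau) to Y with its weak topology, i.e.
   x |-> <A x, y> is tau-continuous for every y (Riesz). *)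
Definition tau_weak_continuous (R : realType) (X : topologicalType)
    (Y : normedModType R) (ip : Y -> Y -> R) (A : X -> Y) : Prop :=
  forall y : Y, continuous (fun x => ip (A x) y).

Definition dom_ext (X : Type) (R : realType) (F : X -> \bar R) : set X :=
  [set x | F x < +oo]%E.

Definition proper_convex (R : realType) (X : lmodType R) (F : X -> \bar R) :=
  [/\ forall x, (F x != -oo)%E,
      exists x, (F x < +oo)%E &
      forall (x y : X) (t : R), 0 <= t <= 1 ->
        (F (t *: x + (1 - t) *: y)%R <= t%:E * F x + (1 - t)%:E * F y)%E].

Definition Tik (R : realType) (X : lmodType R) (Y : normedModType R)
    (A : X -> Y) (F : X -> \bar R) (alpha : R) (x : X) (g : Y) : \bar R :=
  ((`|g - A x| ^+ 2 / (2 * alpha))%:E + F x)%E.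

Definition Ralpha (R : realType) (X : lmodType R) (Y : normedModType R)
    (A : X -> Y) (F : X -> \bar R) (alpha : R) (g : Y) : set X :=
  [set x | dom_ext F x /\
     forall z, dom_ext F z -> (Tik A F alpha x g <= Tik A F alpha z g)%E].

Definition varrho (R : realType) (X : lmodType R) (Y : normedModType R)
    (A : X -> Y) (F : X -> \bar R) (nu : R) (x : X) : \bar R :=
  ereal_sup [set r | exists alpha xa, 0 < alpha /\ Ralpha A F alpha (A x) xa /\
                      r = ((alpha `^ (- nu)) * `|A x - A xa|)%:E].

Definition Kset (R : realType) (X : lmodType R) (Y : normedModType R)
    (A : X -> Y) (F : X -> \bar R) (nu : R) : set X :=
  [set x | (varrho A F nu x < +oo)%E].

From HB Require Import structures.
From mathcomp Require Import all_boot all_order all_algebra.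
From mathcomp Require Import all_classical all_reals all_analysis.
From mathcomp Require Import ring lra.
Import Order.TTheory GRing.Theory Num.Theory.
Import numFieldNormedType.Exports.
Local Open Scope classical_set_scope.
Local Open Scope ring_scope.
Set Implicit Arguments. Unset Strict Implicit. Unset Printing Implicit Defensive.

(* Everything rests on two facts about the Tikhonov functional T_al(., g):
   its sublevel sets are tau-closed (the residual y |-> |g - A y| is
   tau-lower semicontinuous because A is tau-to-weak continuous), so T_al
   and R itself attain their minima on the tau-compact sublevel sets of R;
   and comparing a minimiser x_al of T_al(., A x) with competitors gives
   |A x - A x_al| <= |A x - A z| for every minimiser z of R.
   - K_0 = X follows from this residual bound; the monotonicity of K_nu in
     nu splits the sup defining varrho_nu into al <= 1 and al > 1.
   - For z in dom R + ker A the comparison with z itself gives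
     |A z - A x_al|^2 / al <= 2 (R z - min R), hence K_(1/2).
   - argmin R + ker A lies in every K_nu since then x_al has zero residual.
   - Conversely, for x in K_nu with nu > 1, comparing x_al with convex
     combinations of x_al and a minimiser shows that the x_al are almost
     minimisers of R with almost exact data as al -> 0; a cluster point of
     such elements (compactness) is a minimiser z with A z = A x. *)

Lemma sub_convex_comb (K : pzRingType) (V : lmodType K) (a b c : V) (t : K) :
  a - (t *: b + (1 - t) *: c) = (a - c) - t *: (b - c).
Proof.
rewrite scalerBr scalerBl scale1r opprB opprD opprB.
rewrite -!addrA; congr (_ + _); rewrite addrCA [RHS]addrCA; congr (_ + _).
exact: addrC.
Qed.

Section InnerProduct.
Variables (R : realType) (Y : normedModType R) (ip : Y -> Y -> R).
Hypothesis Hip : inner_product_of_norm ip.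

Lemma ip_sym y z : ip y z = ip z y.
Proof. by case: Hip. Qed.

Lemma ip_norm y : ip y y = `|y| ^+ 2.
Proof. by case: Hip. Qed.

Lemma ipDl x y z : ip (x + y) z = ip x z + ip y z.
Proof. by case: Hip => _ lin _; rewrite -[x in LHS]scale1r lin mul1r. Qed.

Lemma ip0l z : ip 0 z = 0.
Proof. by apply: (addrI (ip 0 z)); rewrite addr0 -ipDl addr0. Qed.

Lemma ipZl a x z : ip (a *: x) z = a * ip x z.
Proof. by case: Hip => _ lin _; have := lin a x 0 z; rewrite addr0 ip0l addr0. Qed.

Lemma ipNl x z : ip (- x) z = - ip x z.
Proof. by rewrite -scaleN1r ipZl mulN1r. Qed.

Lemma ipBl x y z : ip (x - y) z = ip x z - ip y z.
Proof. by rewrite ipDl ipNl. Qed.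

Lemma ipZr a x z : ip z (a *: x) = a * ip z x.
Proof. by rewrite ip_sym ipZl ip_sym. Qed.

Lemma ipBr x y z : ip z (x - y) = ip z x - ip z y.
Proof. by rewrite ip_sym ipBl ![ip _ z]ip_sym. Qed.

Lemma norm_sqrB x y : `|x - y| ^+ 2 = `|x| ^+ 2 - 2 * ip x y + `|y| ^+ 2.
Proof. by rewrite -!ip_norm ipBl !ipBr (ip_sym y x); ring. Qed.

(* Cauchy-Schwarz, from 0 <= | |y| x - |x| y |^2. *)
Lemma ip_le x y : ip x y <= `|x| * `|y|.
Proof.
have := ip_norm (`|y| *: x - `|x| *: y).
rewrite ipBl !ipBr !ipZl !ipZr !ip_norm (ip_sym y x) => H.
have H0 : 0 <= `|x| * `|y| * (`|x| * `|y| - ip x y).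
  have : 0 <= (Num.norm (`|y| *: x - `|x| *: y)) ^+ 2 by rewrite sqr_ge0.
  by rewrite -H; nra.
have [xy0|] := ltP 0 (`|x| * `|y|).
  by rewrite -subr_ge0; move: H0; rewrite pmulr_rge0.
move=> xy_le0; have /eqP : `|x| * `|y| = 0.
  by apply/eqP; rewrite eq_le xy_le0 mulr_ge0.
rewrite mulf_eq0 !normr_eq0 => /orP[] /eqP->.
  by rewrite ip0l normr0 mul0r.
by rewrite ip_sym ip0l normr0 mulr0.
Qed.
End InnerProduct.

Section Compactness.
Variables (R : realType) (T : topologicalType).
Hypothesis hT : hausdorff_space T.

Lemma cluster_closed (G : set_system T) (S : set T) z :
  cluster G z -> G S -> closed S -> S z.
Proof. by move=> Gz GS cS; apply: cS => B Bz; apply: Gz. Qed.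

Lemma exists_min (G : T -> \bar R)
    (Gc : forall l : R, compact [set x | (G x <= l%:E)%E]) (x0 : T) :
  (G x0 < +oo)%E -> exists z, forall w, (G z <= G w)%E.
Proof.
move=> Gx0.
have [[w Gw]|Gfin] := pselect (exists w, G w = -oo%E).
  by exists w => w'; rewrite Gw leNye.
have Ex0 : G x0 = (fine (G x0))%:E.
  by move: Gx0; case E: (G x0) => //= _; exfalso; apply: Gfin; exists x0.
pose I := [set l : R | exists y, (G y <= l%:E)%E].
pose B (l : R) := [set x | (G x <= l%:E)%E].
have B_mono l1 l2 : l1 <= l2 -> B l1 `<=` B l2.
  by move=> l12 x /= Gx; apply: le_trans Gx _; rewrite lee_fin.
have FF : Filter (filter_from I B).
  apply: filter_from_filter; first by exists (fine (G x0)), x0; rewrite -Ex0.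
  move=> l1 l2 [y1 H1] [y2 H2]; have [le12|lt21] := leP l1 l2.
    by exists l1; [exists y1 | move=> x Bx; split=> //; exact: B_mono Bx].
  by exists l2; [exists y2 | move=> x Bx; split=> //; apply: B_mono Bx; exact: ltW].
have PF : ProperFilter (filter_from I B).
  by apply: filter_from_proper => l [y Hy]; exists y.
have KF : filter_from I B (B (fine (G x0))).
  by exists (fine (G x0)) => //; exists x0; rewrite -Ex0.
have [z [_ Cz]] := Gc (fine (G x0)) _ PF KF.
exists z => w; case Gw: (G w) => [r| |]; [|exact: leey|by exfalso; apply: Gfin; exists w].
apply: (cluster_closed Cz (S := B r)); last exact: compact_closed hT (Gc r).
by exists r => //; exists w; rewrite Gw.
Qed.
End Compactness.

Lemma small_param (R : realType) (p eta : R) : 0 < p -> 0 < eta ->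
  exists al : R, [/\ 0 < al, al <= 1, al <= eta & al `^ p <= eta].
Proof.
move=> p0 eta0; have root0 : 0 < eta `^ p^-1 by exact: powR_gt0.
exists (Num.min 1 (Num.min eta (eta `^ p^-1))); split.
- by rewrite !lt_min ltr01 eta0 root0.
- by rewrite ge_min lexx.
- by rewrite !ge_min lexx orbT.
apply: (@le_trans _ _ ((eta `^ p^-1) `^ p)).
  apply: ge0_ler_powR; rewrite ?nnegrE.
  - exact: ltW.
  - by rewrite !le_min ler01 !ltW.
  - exact: ltW.
  - by rewrite !ge_min lexx !orbT.
by rewrite -powRrM mulVf ?gt_eqF // powRr1 // ltW.
Qed.

Section Tikhonov.
Variables (R : realType) (X : tvsType R) (Y : normedModType R) (ip : Y -> Y -> R).
Hypothesis Hip : inner_product_of_norm ip.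
Variable A : {linear X -> Y}.
Hypothesis A_cont : tau_weak_continuous ip A.
Variable F : X -> \bar R.
Hypothesis X_hausdorff : hausdorff_space X.
Hypothesis F_proper_convex : proper_convex F.
Hypothesis F_compact : forall lambda : R, compact [set x | (F x <= lambda%:E)%E].

Lemma dom_fin x : dom_ext F x -> exists r : R, F x = r%:E.
Proof.
case: F_proper_convex => /(_ x) + _ _; rewrite /dom_ext /=.
by case: (F x) => // r _ _; exists r.
Qed.

(* The residual y |-> |g - A y| is tau-lower semicontinuous: A is
   tau-to-weak continuous and the norm is a sup of inner products. *)
Lemma residual_lsc (g : Y) (y : X) (c : R) :
  c < `|g - A y| -> \forall y' \near y, c < `|g - A y'|.
Proof.
move=> cy; have [c0|c0] := ltP c 0.
  by apply: nearW => y'; exact: lt_le_trans c0 _.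
set u := A y - g.
have u0 : 0 < `|u| by rewrite /u distrC; exact: le_lt_trans cy.
pose N := [set y' | c * `|u| + ip g u < ip (A y') u].
have oN : open N.
  apply: (@open_comp _ _ (fun y' => ip (A y') u) [set r | c * `|u| + ip g u < r]).
    by move=> x _; exact: A_cont.
  exact: open_gt.
have Ny : N y.
  rewrite /N /= -ltrBrDr -(ipBl Hip) (ip_norm Hip) expr2 ltr_pM2r //.
  by rewrite /u distrC.
apply: (@filterS _ _ _ N); last exact: open_nbhs_nbhs.
move=> y'; rewrite /N /= -ltrBrDr -(ipBl Hip) => Ny'.
by rewrite distrC -(ltr_pM2r u0); exact: lt_le_trans Ny' (ip_le Hip _ _).
Qed.

Lemma residual_sqr_lsc (g : Y) (y : X) (mu : R) :
  mu < `|g - A y| ^+ 2 -> \forall y' \near y, mu < `|g - A y'| ^+ 2.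
Proof.
move=> muy; have [mu0|mu0] := ltP mu 0.
  by apply: nearW => y'; exact: lt_le_trans mu0 (sqr_ge0 _).
have : Num.sqrt mu < `|g - A y|.
  rewrite -[`|g - A y|]normr_id -sqrtr_sqr ltr_sqrt //.
  exact: le_lt_trans muy.
move/residual_lsc; apply: filterS => y' lt_y'.
by rewrite -(sqr_sqrtr mu0) ltrXn2r // sqrtr_ge0.
Qed.

Lemma Tik_closed al g lam : 0 < al ->
  closed [set y | (Tik A F al y g <= lam%:E)%E].
Proof.
move=> al0 y Cy /=; rewrite leNgt; apply/negP => Tik_gt.
have a0 : 0 < 2 * al by rewrite mulr_gt0.
pose ay := `|g - A y| ^+ 2 / (2 * al).
have [mu [mu_lt F_gt]] : exists mu, mu < ay /\ ((lam - mu)%:E < F y)%E.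
  move: Tik_gt; rewrite /Tik -/ay; case: (F y) => [r| |] /=.
  - rewrite -EFinD lte_fin => H; exists ((ay + lam - r) / 2).
    by split; [lra | rewrite lte_fin; lra].
  - by move=> _; exists (ay - 1); split; [lra | exact: ltey].
  - by rewrite addeNy.
have N1 : nbhs y (~` [set y' | (F y' <= (lam - mu)%:E)%E]).
  apply: open_nbhs_nbhs; split.
    exact: closed_openC (compact_closed X_hausdorff (@F_compact (lam - mu))).
  by rewrite /= => H; move: F_gt; rewrite ltNge H.
have N2 : \forall y' \near y, mu < `|g - A y'| ^+ 2 / (2 * al).
  move: mu_lt; rewrite /ay ltr_pdivlMr // => /residual_sqr_lsc.
  by apply: filterS => y'; rewrite ltr_pdivlMr.
have [y' [+ [+ /= lt_y']]] := Cy _ (filterI N1 N2).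
rewrite /Tik /=; case: (F y') => [r'| |] /=.
- by rewrite -EFinD !lee_fin => H1 H2; apply: H2; lra.
- by rewrite addey // leye_eq.
- by move=> _ H2; apply: H2; exact: leNye.
Qed.

Lemma F_le_Tik al g y : 0 < al -> (F y <= Tik A F al y g)%E.
Proof.
move=> al0; rewrite /Tik; case: (F y) => [r| |] //=.
by rewrite -EFinD lee_fin lerDr divr_ge0 // ?sqr_ge0 // mulr_ge0 // ltW.
Qed.

Lemma Tik_dom al g y : (Tik A F al y g < +oo)%E <-> dom_ext F y.
Proof. by rewrite /Tik /dom_ext /=; case: (F y) => [r| |] //=; rewrite !ltey. Qed.

Lemma Ralpha_nonempty al g : 0 < al -> exists xa, Ralpha A F al g xa.
Proof.
move=> al0; have [x1 Fx1] : exists x, (F x < +oo)%E by case: F_proper_convex.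
have Tc l : compact [set y | (Tik A F al y g <= l%:E)%E].
  apply: subclosed_compact (@Tik_closed al g l al0) (@F_compact l) _.
  by move=> y /= Hy; apply: le_trans Hy; exact: F_le_Tik.
have [z Hz] := exists_min X_hausdorff Tc (proj2 (@Tik_dom al g x1) Fx1).
exists z; split; last by move=> w _; exact: Hz.
apply/(@Tik_dom al g); exact: le_lt_trans (Hz x1) (proj2 (@Tik_dom al g x1) Fx1).
Qed.

Lemma F_min : exists z0 (m : R), F z0 = m%:E /\ forall w, (m%:E <= F w)%E.
Proof.
have [x1 Fx1] : exists x, (F x < +oo)%E by case: F_proper_convex.
have [z Hz] := exists_min X_hausdorff F_compact Fx1.
have [m Fz] := dom_fin (le_lt_trans (Hz x1) Fx1).
by exists z, m; rewrite -Fz.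
Qed.

Lemma Ralpha_compare al g xa z (m r : R) : 0 < al -> Ralpha A F al g xa ->
  (forall w, (m%:E <= F w)%E) -> F z = r%:E ->
  `|g - A xa| ^+ 2 / (2 * al) + m <= `|g - A z| ^+ 2 / (2 * al) + r.
Proof.
move=> al0 [xa_dom opt] Fm Fz.
have := opt z; rewrite /dom_ext /= Fz ltey => /(_ isT).
have [s Fs] := dom_fin xa_dom; have := Fm xa.
by rewrite /Tik Fz Fs -!EFinD !lee_fin; lra.
Qed.

Lemma Ralpha_residual_le al g xa z0 (m : R) : 0 < al -> Ralpha A F al g xa ->
  F z0 = m%:E -> (forall w, (m%:E <= F w)%E) -> `|g - A xa| <= `|g - A z0|.
Proof.
move=> al0 Hxa Fz0 Fm; have := Ralpha_compare al0 Hxa Fm Fz0.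
rewrite lerD2r ler_pM2r ?invr_gt0 ?mulr_gt0 // => H.
by rewrite -ler_sqr // nnegrE.
Qed.

Lemma Ralpha_dist_minimiser al g xa z0 (m : R) : 0 < al -> Ralpha A F al g xa ->
  F z0 = m%:E -> (forall w, (m%:E <= F w)%E) ->
  `|A z0 - A xa| <= 2 * `|g - A z0|.
Proof.
move=> al0 Hxa Fz0 Fm; apply: le_trans (ler_distD g _ _) _.
rewrite distrC mulr2n mulrDl mul1r lerD2l.
exact: Ralpha_residual_le al0 Hxa Fz0 Fm.
Qed.

Lemma KsetP nu x : Kset A F nu x <-> exists M : R,
  forall al xa, 0 < al -> Ralpha A F al (A x) xa ->
    al `^ (- nu) * `|A x - A xa| <= M.
Proof.
rewrite /Kset /varrho /=; set S := [set r | _]; split.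
  have ub al xa : 0 < al -> Ralpha A F al (A x) xa ->
      ((al `^ (- nu) * `|A x - A xa|)%:E <= ereal_sup S)%E.
    by move=> al0 H; apply: ereal_sup_ubound; exists al, xa.
  case E: (ereal_sup S) => [M| |] // _.
    exists (Num.max M 0) => al xa al0 H.
    by have := ub al xa al0 H; rewrite E lee_fin le_max => ->.
  by exists 0 => al xa al0 H; have := ub al xa al0 H; rewrite E.
case=> M HM; apply: (@le_lt_trans _ _ M%:E); last exact: ltey.
apply: ge_ereal_sup => _ [al [xa [al0 [H ->]]]].
by rewrite lee_fin; exact: HM.
Qed.

(* Part 1: K_0 = X, since |A x - A x_al| <= |A x - A z0| for a minimiser z0. *)
Lemma Kset0 : Kset A F 0 = [set: X].
Proof.
have [z0 [m [Fz0 Fm]]] := F_min.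
apply/seteqP; split => // x _; apply/KsetP; exists `|A x - A z0| => al xa al0 H.
by rewrite oppr0 powRr0 mul1r; exact: Ralpha_residual_le H Fz0 Fm.
Qed.

(* Part 2: K_nu decreases in nu; for al <= 1 use the larger exponent, for
   al > 1 the residual bound of part 1. *)
Lemma Kset_antitone nu1 nu2 : 0 <= nu1 -> nu1 <= nu2 ->
  Kset A F nu2 `<=` Kset A F nu1.
Proof.
move=> nu10 nu12 x /KsetP[M2 HM2]; have [z0 [m [Fz0 Fm]]] := F_min.
apply/KsetP; exists (Num.max M2 `|A x - A z0|) => al xa al0 H.
have d0 := normr_ge0 (A x - A xa); rewrite le_max; apply/orP.
have [al1|al1] := leP al 1.
  left; apply: le_trans (HM2 _ _ al0 H); apply: ler_wpM2r => //.
  by apply: ger_powR; [rewrite al0 al1 | rewrite lerN2].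
right; apply: le_trans (Ralpha_residual_le al0 H Fz0 Fm).
rewrite -[leRHS]mul1r; apply: ler_wpM2r => //.
by rewrite -(powRr0 al); apply: ler_powR; [exact: ltW | rewrite oppr_le0].
Qed.

(* Part 4: for x = z + k with R z finite and A k = 0, comparing x_al with z
   gives |A z - A x_al|^2 / al <= 2 (R z - min R). *)
Lemma dom_ker_sub_Kset_half :
  [set x | exists z k, dom_ext F z /\ A k = 0 /\ x = z + k] `<=` Kset A F (1 / 2).
Proof.
move=> _ [z [k [z_dom [Ak ->]]]]; have [z0 [m [Fz0 Fm]]] := F_min.
have [r Fz] := dom_fin z_dom.
have Azk : A (z + k) = A z by rewrite linearD Ak addr0.
apply/KsetP; exists (1 + 2 * (r - m)) => al xa al0 H; rewrite Azk in H *.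
have := Ralpha_compare al0 H Fm Fz.
rewrite subrr normr0 expr0n /= mul0r add0r => Hb.
set d := `|A z - A xa| in Hb *; set e := al `^ (- (1 / 2)) * d.
have e0 : 0 <= e by apply: mulr_ge0; [exact: powR_ge0 | exact: normr_ge0].
have e2 : e ^+ 2 = d ^+ 2 / al.
  rewrite /e exprMn mulrC; congr (_ * _).
  rewrite -powR_mulrn ?powR_ge0 // -powRrM.
  have -> : - (1 / 2) * 2%:R = -1 :> R by field.
  by rewrite powR_inv1 // ltW.
have : d ^+ 2 / al <= 2 * (r - m).
  move: Hb; rewrite invfM mulrA => Hb.
  have : d ^+ 2 / al / 2 <= r - m by lra.
  by rewrite ler_pdivrMr //; lra.
by rewrite -e2; nra.
Qed.

(* Part 3, first inclusion: for x = z + k with z a minimiser and A k = 0,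
   every x_al has zero residual. *)
Lemma argmin_ker_sub_Kset nu :
  [set x | exists z k, (forall w, (F z <= F w)%E) /\ A k = 0 /\ x = z + k]
  `<=` Kset A F nu.
Proof.
move=> _ [z [k [zmin [Ak ->]]]]; have [z0 [m [Fz0 Fm]]] := F_min.
have Fz : F z = m%:E by apply/eqP; rewrite eq_le Fm -Fz0 zmin.
have Azk : A (z + k) = A z by rewrite linearD Ak addr0.
apply/KsetP; exists 0 => al xa al0 H; rewrite Azk in H *.
have := Ralpha_compare al0 H Fm Fz.
rewrite subrr normr0 expr0n /= mul0r add0r gerDr => Hb.
have : `|A z - A xa| ^+ 2 <= 0.
  by move: Hb; rewrite pmulr_lle0 // invr_gt0 mulr_gt0.
move=> sq_le0; have -> : `|A z - A xa| = 0.
  by apply/eqP; rewrite -sqrf_eq0 eq_le sq_le0 sqr_ge0.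
by rewrite mulr0.
Qed.

(* Comparing x_al with the convex combination t z0 + (1 - t) x_al bounds the
   excess R x_al - R z0 by the residual of x_al. *)
Lemma Ralpha_excess al t g xa z0 (m : R) : 0 < al -> 0 < t <= 1 ->
  Ralpha A F al g xa -> F z0 = m%:E ->
  exists2 s : R, F xa = s%:E &
    (s - m) * al <= `|g - A xa| * `|A z0 - A xa| + t * `|A z0 - A xa| ^+ 2 / 2.
Proof.
move=> al0 /andP[t0 t1] [xa_dom opt] Fz0.
have a0 : 0 < 2 * al by rewrite mulr_gt0.
have [s Fs] := dom_fin xa_dom; exists s => //.
set yt := t *: z0 + (1 - t) *: xa.
have Fyt : (F yt <= (t * m + (1 - t) * s)%:E)%E.
  case: F_proper_convex => _ _ /(_ z0 xa t); rewrite t1 ltW //= Fz0 Fs.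
  by rewrite -!EFinM -EFinD; apply.
have yt_dom : dom_ext F yt by exact: le_lt_trans Fyt (ltey _).
have [u Fu] := dom_fin yt_dom; move: Fyt; rewrite Fu lee_fin => Fyt.
have := opt yt yt_dom; rewrite /Tik Fs Fu -!EFinD lee_fin.
set P := `|g - A xa| ^+ 2; set Q := `|g - A yt| ^+ 2.
move=> /(ler_wpM2r (ltW a0)); set c := 2 * al.
rewrite !mulrDl !divfK ?gt_eqF // {}/c => opt_yt.
set r := g - A xa; set d := A z0 - A xa.
have EQ : Q = P - 2 * t * ip r d + t ^+ 2 * `|d| ^+ 2.
  have Ayt : A yt = t *: A z0 + (1 - t) *: A xa by rewrite linearD !linearZ.
  rewrite /Q Ayt sub_convex_comb (norm_sqrB Hip) (ipZr Hip) normrZ.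
  by rewrite ger0_norm ?ltW // /P /r /d; ring.
have CS : - ip r d <= `|r| * `|d|.
  by rewrite -(ipNl Hip) -(normrN r); exact: ip_le.
have := ler_wpM2r (ltW a0) Fyt; have := ler_wpM2l (ltW t0) CS.
rewrite EQ in opt_yt => tCS Fyt2.
have key : t * ((s - m) * al) <= t * (`|r| * `|d| + t * `|d| ^+ 2 / 2) by lra.
by rewrite ler_pM2l // in key; lra.
Qed.

(* With t = al^2: if the residual of x_al is at most al B, the excess of
   x_al over min R is at most B D + al D^2 / 2, where D = 2 |g - A z0|. *)
Lemma Ralpha_excess_small al g xa z0 (m B : R) : 0 < al <= 1 ->
  Ralpha A F al g xa -> F z0 = m%:E -> (forall w, (m%:E <= F w)%E) ->
  `|g - A xa| <= al * B ->
  exists2 s : R, F xa = s%:E &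
    s - m <= B * (2 * `|g - A z0|) + al * (2 * `|g - A z0|) ^+ 2 / 2.
Proof.
move=> /andP[al0 al1] Hxa Fz0 Fm res; set D := 2 * `|g - A z0|.
have dD : `|A z0 - A xa| <= D by exact: Ralpha_dist_minimiser al0 Hxa Fz0 Fm.
have al2 : 0 < al ^+ 2 <= 1 by rewrite exprn_gt0 //=; nra.
have [s Fs excess] := Ralpha_excess al0 al2 Hxa Fz0; exists s => //.
rewrite -(ler_pM2r al0); apply: le_trans excess _.
rewrite mulrDl; apply: lerD.
  have -> : B * D * al = al * B * D by ring.
  exact: ler_pM (normr_ge0 _) (normr_ge0 _) res dD.
have -> : al * D ^+ 2 / 2 * al = al ^+ 2 * D ^+ 2 / 2 by ring.
apply: ler_wpM2r; first by rewrite invr_ge0.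
by apply: ler_wpM2l; rewrite ?sqr_ge0 // ler_sqr ?nnegrE // mulr_ge0.
Qed.

(* For x in K_nu with nu > 1, regularised solutions x_al for small al are
   almost minimisers of R with almost exact data A x: the residual of x_al
   is at most M al^nu, so its excess is at most M al^(nu-1) D + al D^2 / 2. *)
Lemma Kset_almost_min nu x z0 (m : R) : 1 < nu -> Kset A F nu x ->
  F z0 = m%:E -> (forall w, (m%:E <= F w)%E) ->
  forall eta, 0 < eta ->
    exists y, (F y <= (m + eta)%:E)%E /\ `|A x - A y| <= eta.
Proof.
move=> nu1 /KsetP[M HM] Fz0 Fm eta eta0.
have M0 : 0 <= M.
  have [y Hy] := Ralpha_nonempty (A x) ltr01.
  by apply: le_trans (HM _ _ ltr01 Hy); rewrite mulr_ge0 ?powR_ge0.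
set D := 2 * `|A x - A z0|.
have D0 : 0 <= D by rewrite mulr_ge0.
set c := M * D + D ^+ 2 + M + 1.
have c0 : 0 < c by rewrite /c; have := mulr_ge0 M0 D0; have := sqr_ge0 D; lra.
set e := eta / c.
have Eeta : eta = e * c by rewrite divfK ?gt_eqF.
have nu1_0 : 0 < nu - 1 by rewrite subr_gt0.
have e0 : 0 < e by rewrite divr_gt0.
have [al [al0 al1 ale qe]] := small_param nu1_0 e0.
set q := al `^ (nu - 1) in qe.
have q0 : 0 <= q by exact: powR_ge0.
have [xa Hxa] := Ralpha_nonempty (A x) al0.
have res : `|A x - A xa| <= al * (M * q).
  have := HM _ _ al0 Hxa; rewrite powRN mulrC ler_pdivrMr ?powR_gt0 //.
  by rewrite mulrCA /q mulr_powRB1 // ?ltW // (lt_trans ltr01).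
have al01 : 0 < al <= 1 by rewrite al0 al1.
have [s Fs excess] := Ralpha_excess_small al01 Hxa Fz0 Fm res.
exists xa; split.
  rewrite Fs lee_fin Eeta /c; rewrite -/D in excess.
  have h1 : M * q * D <= M * e * D by apply: ler_wpM2r => //; exact: ler_wpM2l.
  have h2 : al * D ^+ 2 <= e * D ^+ 2 by apply: ler_wpM2r; rewrite ?sqr_ge0.
  have := mulr_ge0 (ltW e0) (sqr_ge0 D); have := mulr_ge0 M0 (ltW e0).
  by lra.
apply: le_trans res _; rewrite Eeta /c.
have : al * (M * q) <= M * e by rewrite mulrCA; apply: ler_wpM2l => //; nra.
by have := mulr_ge0 M0 D0; have := sqr_ge0 D; nra.
Qed.

(* Almost minimisers of R with almost exact data g cluster, by compactness of
   the sublevel sets, at a minimiser z of R, which reproduces g exactly since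
   A is tau-to-weak continuous. *)
Lemma almost_min_cluster g (m : R) : (forall w, (m%:E <= F w)%E) ->
  (forall eta, 0 < eta ->
     exists y, (F y <= (m + eta)%:E)%E /\ `|g - A y| <= eta) ->
  exists z, (forall w, (F z <= F w)%E) /\ A z = g.
Proof.
move=> Fm approx.
pose S eta := [set y | (F y <= (m + eta)%:E)%E /\ `|g - A y| <= eta].
pose G := filter_from [set eta | 0 < eta] S.
have S_mono e1 e2 : e1 <= e2 -> S e1 `<=` S e2.
  move=> e12 y [Fy Ay]; split; last exact: le_trans Ay e12.
  by apply: le_trans Fy _; rewrite lee_fin lerD2l.
have G_proper : ProperFilter G.
  apply: filter_from_proper; last by move=> e /approx.
  apply: filter_from_filter; first by exists 1; exact: ltr01.
  move=> e1 e2 e10 e20; exists (Num.min e1 e2); first by rewrite /= lt_min e10 e20.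
  by move=> y Sy; split; apply: S_mono Sy; rewrite ge_min lexx ?orbT.
have G_sub : G [set y | (F y <= (m + 1)%:E)%E] by exists 1; [exact: ltr01 | move=> y []].
have [z [_ Gz]] := @F_compact (m + 1) G G_proper G_sub.
have in_closed (C : set X) eta : 0 < eta -> S eta `<=` C -> closed C -> C z.
  by move=> eta0 sub; apply: cluster_closed Gz _; exists eta.
have Fz : (F z <= m%:E)%E.
  apply/lee_addgt0Pr => e e0; rewrite -EFinD.
  apply: (in_closed [set y | (F y <= (m + e)%:E)%E] e e0); first by move=> y [].
  exact: compact_closed X_hausdorff (@F_compact (m + e)).
exists z; split; first by move=> w; exact: le_trans Fz (Fm w).
have weak v : ip (A z - g) v <= 0.
  apply/ler_addgt0Pr => e e0; rewrite add0r (ipBl Hip) lerBlDl.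
  have v1 : 0 < `|v| + 1 by rewrite ltr_wpDl.
  apply: (in_closed ((fun y => ip (A y) v) @^-1` [set r | r <= ip g v + e])
                    (e / (`|v| + 1))); first exact: divr_gt0.
  - move=> y [_ Ay] /=; rewrite -lerBlDl -(ipBl Hip).
    apply: le_trans (ip_le Hip _ _) _; rewrite distrC.
    apply: le_trans (ler_wpM2r (normr_ge0 v) Ay) _.
    by rewrite mulrAC ler_pdivrMr // ler_pM2l //; lra.
  - by apply: preimage_closed; [move=> y _; exact: A_cont | exact: closed_le].
apply/eqP; rewrite -subr_eq0 -normr_eq0 -sqrf_eq0 -(ip_norm Hip).
by rewrite eq_le weak /= (ip_norm Hip) sqr_ge0.
Qed.

Lemma Kset_sub_argmin_ker nu : 1 < nu -> Kset A F nu `<=`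
  [set x | exists z k, (forall w, (F z <= F w)%E) /\ A k = 0 /\ x = z + k].
Proof.
move=> nu1 x Kx; have [z0 [m [Fz0 Fm]]] := F_min.
have [z [zmin Az]] := almost_min_cluster Fm (Kset_almost_min nu1 Kx Fz0 Fm).
exists z, (x - z); split=> //; split; last by rewrite addrC subrK.
by rewrite linearB /= Az subrr.
Qed.
End Tikhonov.
Unset Implicit Arguments.

Theorem lemma3p6 (R : realType)
  (Xn : completeNormedModType R) (X : tvsType R)
  (iota : {linear Xn -> X}) (iota_bij : bijective iota)
  (X_hausdorff : hausdorff_space X)
  (F : X -> \bar R) (F_proper_convex : proper_convex F)
  (F_compact_sublevels : forall lambda : R, compact [set x | (F x <= lambda%:E)%E])
  (Y : completeNormedModType R) (ip : Y -> Y -> R)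
  (Y_hilbert : inner_product_of_norm ip)
  (A : {linear X -> Y}) (A_cont : tau_weak_continuous ip A) :
  [/\ Kset A F 0 = [set: X],
      (forall nu1 nu2 : R, 0 <= nu1 -> nu1 <= nu2 -> Kset A F nu2 `<=` Kset A F nu1),
      (forall nu : R, 1 < nu ->
         Kset A F nu = [set x | exists z k, (forall w, (F z <= F w)%E) /\
                                               A k = 0 /\ x = z + k]) &
      [set x | exists z k, dom_ext F z /\ A k = 0 /\ x = z + k] `<=` Kset A F (1 / 2)].
Proof.
have Kset_0 := Kset0 A X_hausdorff F_proper_convex F_compact_sublevels.
have antitone := Kset_antitone X_hausdorff F_proper_convex F_compact_sublevels.
have half := dom_ker_sub_Kset_half X_hausdorff F_proper_convex F_compact_sublevels.
have above := argmin_ker_sub_Kset X_hausdorff F_proper_convex F_compact_sublevels.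
have below := Kset_sub_argmin_ker Y_hilbert A_cont X_hausdorff
  F_proper_convex F_compact_sublevels.
split=> //.
- by move=> nu1 nu2; exact: antitone.
- by move=> nu nu1; apply/seteqP; split; [exact: below | exact: above].
- exact: half.
Qed.
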